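(* Let $\sigma>1$ and $a>0$ with $\sigma e^{-a}>1$. Define a sequence $(\rho^*_k)_{k\ge0}$ by the recurrence $$\rho^*_0=\frac{\sigma e^{-a}-1}{\sigma-1},\qquad \rho^*_k=\frac{e^{-a}}{(\sigma-1)\rho^*_0+1-e^{-a}}\Big(\sigma\frac{a^k}{k!}\rho^*_0+\sum_{l=1}^{k-1}\frac{a^{k-l}}{(k-l)!}\rho^*_l\Big),\quad k\ge1.$$ Then its generating function is $\sum_{k\ge0}\rho^*_kX^k=(\sigma e^{-a}-1)\dfrac{e^{aX}}{\sigma-e^{aX}}$, and for every $k\ge0$ $$\rho^*_k=(\sigma e^{-a}-1)\frac{a^k}{k!}\sum_{i\ge1}\frac{i^k}{\sigma^i}.$$ Moreover $\sum_{k\ge0}\rho^*_k=1$, so $(\rho^*_k)_{k\ge0}$ is a probability distribution on $\mathbb N$, whose expectation and variance are $$\frac{\sigma a e^{-a}}{\sigma e^{-a}-1}\qquad\text{and}\qquad \frac{\sigma a e^{-a}(\sigma e^{-a}+a-1)}{(\sigma e^{-a}-1)^2}.$$ *)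

From Stdlib Require Import Reals Lra Lia Arith Factorial.
Open Scope R_scope.

Definition rho0 (sigma a : R) : R := (sigma * exp (- a) - 1) / (sigma - 1).

(* rho_aux n : a function that is correct (equal to rho*_j) for all j <= n. *)
Fixpoint rho_aux (sigma a : R) (n : nat) : nat -> R :=
  match n with
  | O => fun _ => rho0 sigma a
  | S m =>
      let prev := rho_aux sigma a m in
      let k := S m in
      let newv :=
        exp (- a) / ((sigma - 1) * rho0 sigma a + 1 - exp (- a)) *
        (sigma * (a ^ k / INR (fact k)) * rho0 sigma a
         + sum_f_R0 (fun l => if (1 <=? l)%nat
                              then a ^ (k - l) / INR (fact (k - l)) * prev l
                              else 0) (k - 1)) in
      fun j => if (j <=? m)%nat then prev j else newv
  end.

Definition rho (sigma a : R) (k : nat) : R := rho_aux sigma a k k.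

(* Write e_k = a^k/k!, c = sigma e^{-a} - 1 and s_k = sum_{i >= 1} i^k / sigma^i.

   1. Unfolding the recurrence, rho* solves the convolution identity
        sigma u_k - sum_{l <= k} u_l e_{k-l} = c e_k        (k >= 0),
      whose k-th instance determines u_k from u_0, ..., u_{k-1} since sigma <> 1.
   2. The binomial theorem gives sum_{l <= k} C(k,l) s_l = sigma s_k - 1, so the
      closed formula t_k = c e_k s_k solves the same identity; hence rho*_k = t_k,
      and in particular rho*_k >= 0.
   3. From i^k <= k!/r^k e^{ri} we get s_k <= (k!/r^k) q/(1-q) with q = e^r/sigma,
      so sum rho*_k x^k converges for |x| < ln sigma / a.  There, the Cauchy
      product with the exponential series turns the convolution identity into
      F (sigma - e^{ax}) = c e^{ax}, which is the generating function.
   4. The hypothesis sigma e^{-a} > 1 puts x = 1 inside the disc.  Evaluating the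
      generating function and its first two derivatives at 1 gives the total
      mass, the mean and the second factorial moment, hence the variance. *)

From Stdlib Require Import Reals Lra Lia Arith Factorial.
From Coquelicot Require Import Coquelicot.
Open Scope R_scope.

Definition exp_coef (a : R) (k : nat) : R := a ^ k / INR (fact k).

(* e_0 = 1: the diagonal term of the convolution is u_k itself. *)
Lemma exp_coef_0 (a : R) : exp_coef a 0 = 1.
Proof. unfold exp_coef. simpl. field. Qed.

Definition solves_convolution (sigma c a : R) (u : nat -> R) : Prop :=
  forall k : nat,
    sigma * u k - sum_f_R0 (fun l => u l * exp_coef a (k - l)) k = c * exp_coef a k.

(* For sigma <> 1 the identity determines u: its k-th instance reads
   (sigma - 1) u_k = c e_k + (terms in u_l, l < k). *)
Lemma convolution_unique (sigma c a : R) (u v : nat -> R) :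
  sigma <> 1 -> solves_convolution sigma c a u -> solves_convolution sigma c a v ->
  forall k, u k = v k.
Proof.
  intros Hs Hu Hv k. induction k as [k IH] using (well_founded_induction lt_wf).
  assert (E := eq_trans (Hu k) (eq_sym (Hv k))).
  assert (Hs1 : sigma - 1 <> 0) by lra.
  destruct k as [|m].
  - cbn [sum_f_R0] in E. rewrite Nat.sub_diag, exp_coef_0 in E.
    apply (Rmult_eq_reg_l (sigma - 1)); [lra | exact Hs1].
  - rewrite !tech5, Nat.sub_diag, exp_coef_0 in E.
    rewrite (sum_eq (fun l => u l * _) (fun l => v l * exp_coef a (S m - l))) in E
      by (intros l Hl; rewrite IH by lia; reflexivity).
    apply (Rmult_eq_reg_l (sigma - 1)); [lra | exact Hs1].
Qed.

Lemma rho_aux_succ_le (sigma a : R) (m j : nat) :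
  (j <= m)%nat -> rho_aux sigma a (S m) j = rho_aux sigma a m j.
Proof. intros Hj. cbn [rho_aux]. apply Nat.leb_le in Hj. now rewrite Hj. Qed.

Lemma rho_aux_rho (sigma a : R) (n j : nat) :
  (j <= n)%nat -> rho_aux sigma a n j = rho sigma a j.
Proof.
  induction n as [|n IH]; intros Hj.
  - now replace j with 0%nat by lia.
  - destruct (Nat.eq_dec j (S n)) as [-> | Hne]; [reflexivity|].
    rewrite rho_aux_succ_le by lia. apply IH. lia.
Qed.

(* The recurrence of the paper for rho*_{m+1}, the sum over 1 <= l <= m being
   written as the full sum over l <= m minus its l = 0 term. *)
Lemma rho_succ (sigma a : R) (m : nat) :
  rho sigma a (S m) =
  exp (- a) / ((sigma - 1) * rho0 sigma a + 1 - exp (- a)) *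
  (sigma * exp_coef a (S m) * rho0 sigma a
   + (sum_f_R0 (fun l => rho sigma a l * exp_coef a (S m - l)) m
      - exp_coef a (S m) * rho0 sigma a)).
Proof.
  unfold rho at 1. cbn [rho_aux].
  replace (S m <=? m)%nat with false by (symmetry; apply Nat.leb_gt; lia).
  replace (S m - 1)%nat with m by lia.
  set (g l := rho sigma a l * exp_coef a (S m - l)).
  assert (Hguard : forall n, sum_f_R0 (fun l => if (1 <=? l)%nat then g l else 0) n
                             = sum_f_R0 g n - g 0%nat).
  { induction n as [|n IH]; [simpl; lra|].
    rewrite !tech5, IH. simpl (1 <=? S n)%nat. lra. }
  rewrite <- (sum_eq (fun l => if (1 <=? l)%nat then g l else 0)).
  - rewrite Hguard. unfold g. rewrite Nat.sub_0_r.
    change (rho sigma a 0) with (rho0 sigma a). unfold exp_coef. ring.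
  - intros l Hl. unfold g, exp_coef. destruct (1 <=? l)%nat; [|reflexivity].
    rewrite rho_aux_rho by exact Hl. ring.
Qed.

Lemma rho_solves_convolution (sigma a : R) :
  1 < sigma -> solves_convolution sigma (sigma * exp (- a) - 1) a (rho sigma a).
Proof.
  intros Hs k. assert (He := exp_pos (- a)).
  assert (Hden : (sigma - 1) * rho0 sigma a + 1 - exp (- a) = (sigma - 1) * exp (- a))
    by (unfold rho0; field; lra).
  destruct k as [|m].
  - cbn [sum_f_R0]. rewrite Nat.sub_diag, exp_coef_0.
    change (rho sigma a 0) with (rho0 sigma a). unfold rho0. field. lra.
  - rewrite tech5, Nat.sub_diag, exp_coef_0, rho_succ, Hden.
    change (rho sigma a 0) with (rho0 sigma a).
    unfold rho0. field. lra.
Qed.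

Lemma is_series_Rscal (c : R) (u : nat -> R) (l : R) :
  is_series u l -> is_series (fun n => c * u n) (c * l).
Proof. intros H. exact (is_series_scal_l c u l H). Qed.

Lemma is_series_Rplus (u v : nat -> R) (l m : R) :
  is_series u l -> is_series v m -> is_series (fun n => u n + v n) (l + m).
Proof. intros Hu Hv. exact (is_series_plus u v l m Hu Hv). Qed.

Lemma is_series_Rminus (u v : nat -> R) (l m : R) :
  is_series u l -> is_series v m -> is_series (fun n => u n - v n) (l - m).
Proof. intros Hu Hv. exact (is_series_minus u v l m Hu Hv). Qed.

Lemma is_series_Rext (u v : nat -> R) (l : R) :
  (forall n, u n = v n) -> is_series u l -> is_series v l.
Proof. intros E H. exact (is_series_ext u v l E H). Qed.

Lemma is_series_sum_f_R0 (f : nat -> nat -> R) (L : nat -> R) (k : nat) :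
  (forall l, (l <= k)%nat -> is_series (f l) (L l)) ->
  is_series (fun i => sum_f_R0 (fun l => f l i) k) (sum_f_R0 L k).
Proof.
  induction k as [|k IH]; intros H; simpl.
  - apply H. lia.
  - apply is_series_Rplus; [apply IH; intros l Hl|]; apply H; lia.
Qed.

Lemma exp_coef_nonneg (a : R) (k : nat) : 0 <= a -> 0 <= exp_coef a k.
Proof.
  intros Ha. unfold exp_coef. apply Rmult_le_pos; [now apply pow_le|].
  apply Rlt_le, Rinv_0_lt_compat, INR_fact_lt_0.
Qed.

Lemma exp_coef_le_exp (z : R) (k : nat) : 0 <= z -> exp_coef z k <= exp z.
Proof.
  intros Hz. apply Rle_trans with (sum_f_R0 (exp_coef z) k); [|exact (exp_ge_taylor z k Hz)].
  destruct k as [|k]; [simpl; lra|].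
  rewrite tech5. assert (0 <= sum_f_R0 (exp_coef z) k); [|lra].
  apply cond_pos_sum. intros n. now apply exp_coef_nonneg.
Qed.

Lemma pow_le_exp (r y : R) (k : nat) :
  0 < r -> 0 <= y -> y ^ k <= INR (fact k) / r ^ k * exp (r * y).
Proof.
  intros Hr Hy.
  assert (H := exp_coef_le_exp (r * y) k ltac:(apply Rmult_le_pos; lra)).
  unfold exp_coef in H. rewrite Rpow_mult_distr in H.
  assert (Hf := INR_fact_lt_0 k). assert (Hrk : 0 < r ^ k) by (apply pow_lt; lra).
  replace (y ^ k) with (r ^ k * y ^ k / INR (fact k) * (INR (fact k) / r ^ k))
    by (field; lra).
  rewrite (Rmult_comm (INR (fact k) / r ^ k)).
  apply Rmult_le_compat_r; [|exact H].
  apply Rlt_le, Rdiv_lt_0_compat; lra.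
Qed.

(* The terms (i+1)^k / sigma^(i+1) of s_k = sum_{i >= 1} i^k / sigma^i. *)
Definition pow_geom_term (sigma : R) (k i : nat) : R := INR (S i) ^ k / sigma ^ S i.

(* s_k itself (a meaningful value once the series is shown to converge). *)
Definition pow_geom_sum (sigma : R) (k : nat) : R := Series (pow_geom_term sigma k).

Lemma pow_geom_term_nonneg (sigma : R) (k i : nat) : 0 < sigma -> 0 <= pow_geom_term sigma k i.
Proof.
  intros Hs. unfold pow_geom_term. apply Rmult_le_pos; [apply pow_le, pos_INR|].
  apply Rlt_le, Rinv_0_lt_compat, pow_lt; lra.
Qed.

Lemma exp_pow (r : R) (n : nat) : exp r ^ n = exp (INR n * r).
Proof.
  rewrite <- (exp_ln (exp r ^ n)) by (apply pow_lt, exp_pos).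
  now rewrite ln_pow, ln_exp by apply exp_pos.
Qed.

Lemma pow_geom_term_bound (sigma r : R) (k i : nat) : 0 < r -> 0 < sigma ->
  pow_geom_term sigma k i <= INR (fact k) / r ^ k * (exp r / sigma) ^ S i.
Proof.
  intros Hr Hs. unfold pow_geom_term, Rdiv at 3.
  rewrite Rpow_mult_distr, pow_inv, exp_pow.
  assert (H := pow_le_exp r (INR (S i)) k Hr (pos_INR _)).
  rewrite (Rmult_comm r) in H.
  replace (INR (fact k) / r ^ k * (exp (INR (S i) * r) * / sigma ^ S i))
    with (INR (fact k) / r ^ k * exp (INR (S i) * r) * / sigma ^ S i) by ring.
  apply Rmult_le_compat_r; [apply Rlt_le, Rinv_0_lt_compat, pow_lt; lra | exact H].
Qed.

Lemma pow_geom_sum_bound (sigma r : R) (k : nat) : 0 < r -> exp r < sigma ->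
  ex_series (pow_geom_term sigma k) /\
  pow_geom_sum sigma k
    <= INR (fact k) / r ^ k * ((exp r / sigma) / (1 - exp r / sigma)).
Proof.
  intros Hr Hrs. assert (He := exp_pos r).
  set (q := exp r / sigma).
  assert (Hq : 0 < q < 1).
  { unfold q. split; [apply Rdiv_lt_0_compat; lra|].
    apply (Rmult_lt_reg_r sigma); [lra|]. field_simplify; lra. }
  assert (Hgeom : is_series (fun i => INR (fact k) / r ^ k * q ^ S i)
                    (INR (fact k) / r ^ k * (q / (1 - q)))).
  { apply is_series_Rscal.
    apply (is_series_Rext (fun i => q * q ^ i)); [reflexivity|].
    apply (is_series_Rscal q), is_series_geom. rewrite Rabs_pos_eq; lra. }
  assert (Hdom : forall i, 0 <= pow_geom_term sigma k i <= INR (fact k) / r ^ k * q ^ S i).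
  { intros i. split; [apply pow_geom_term_nonneg; lra|].
    apply pow_geom_term_bound; lra. }
  assert (Hex : ex_series (pow_geom_term sigma k)).
  { apply (ex_series_le (pow_geom_term sigma k) (fun i => INR (fact k) / r ^ k * q ^ S i));
      [|eexists; exact Hgeom].
    intros i. change (norm (pow_geom_term sigma k i)) with (Rabs (pow_geom_term sigma k i)).
    rewrite Rabs_pos_eq; apply Hdom. }
  split; [exact Hex|].
  rewrite <- (is_series_unique _ _ Hgeom).
  apply Series_le; [exact Hdom | eexists; exact Hgeom].
Qed.

(* For sigma > 1 the series s_k converges (take r = (ln sigma)/2 above). *)
Lemma pow_geom_sum_correct (sigma : R) (k : nat) :
  1 < sigma -> is_series (pow_geom_term sigma k) (pow_geom_sum sigma k).
Proof.
  intros Hs. apply Series_correct.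
  assert (Hl : 0 < ln sigma) by (rewrite <- ln_1; apply ln_increasing; lra).
  apply (pow_geom_sum_bound sigma (ln sigma / 2)); [lra|].
  rewrite <- (exp_ln sigma) at 2 by lra. apply exp_increasing. lra.
Qed.

Lemma pow_geom_sum_nonneg (sigma : R) (k : nat) : 1 < sigma -> 0 <= pow_geom_sum sigma k.
Proof.
  intros Hs. assert (H := pow_geom_sum_correct sigma k Hs).
  assert (H0 := is_series_Rscal 0 _ _ H). rewrite Rmult_0_l in H0.
  rewrite <- (is_series_unique _ _ H0). apply Series_le; [|eexists; exact H].
  intros i. rewrite Rmult_0_l. split; [lra | apply pow_geom_term_nonneg; lra].
Qed.

Lemma pow_geom_term_0 (sigma : R) (k : nat) : sigma <> 0 -> pow_geom_term sigma k 0 = / sigma.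
Proof. intros Hs. unfold pow_geom_term. simpl. rewrite pow1. field. exact Hs. Qed.

(* Binomial identity sum_{l <= k} C(k,l) s_l = sigma s_k - 1: summing the
   binomial expansion of (i+1)^k against sigma^{-i} shifts the series by one. *)
Lemma pow_geom_sum_binomial (sigma : R) (k : nat) : 1 < sigma ->
  sum_f_R0 (fun l => Binomial.C k l * pow_geom_sum sigma l) k
  = sigma * pow_geom_sum sigma k - 1.
Proof.
  intros Hs.
  assert (Hbin : forall i, sigma * pow_geom_term sigma k (S i)
                 = sum_f_R0 (fun l => Binomial.C k l * pow_geom_term sigma l i) k).
  { intros i. unfold pow_geom_term.
    rewrite (sum_eq _ (fun l => Binomial.C k l * INR (S i) ^ l * 1 ^ (k - l) * / sigma ^ S i))
      by (intros l _; rewrite pow1; unfold Rdiv; ring).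
    rewrite <- (scal_sum (fun l => Binomial.C k l * INR (S i) ^ l * 1 ^ (k - l))).
    rewrite <- binomial, <- S_INR.
    change (sigma ^ S (S i)) with (sigma * sigma ^ S i).
    field. split; [apply pow_nonzero|]; lra. }
  assert (Hshift : is_series (fun i => sigma * pow_geom_term sigma k (S i))
                     (sigma * (pow_geom_sum sigma k - / sigma))).
  { apply is_series_Rscal, is_series_incr_1.
    rewrite pow_geom_term_0 by lra.
    replace (plus _ _) with (pow_geom_sum sigma k) by (cbn; ring).
    now apply pow_geom_sum_correct. }
  apply (is_series_Rext _ _ _ Hbin) in Hshift.
  assert (Hsum := is_series_sum_f_R0 (fun l i => Binomial.C k l * pow_geom_term sigma l i)
                    (fun l => Binomial.C k l * pow_geom_sum sigma l) k
                    (fun l _ => is_series_Rscal _ _ _ (pow_geom_sum_correct sigma l Hs))).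
  rewrite <- (is_series_unique _ _ Hsum), (is_series_unique _ _ Hshift).
  field. lra.
Qed.

Lemma exp_coef_mul (a : R) (k l : nat) :
  (l <= k)%nat -> exp_coef a l * exp_coef a (k - l) = Binomial.C k l * exp_coef a k.
Proof.
  intros Hl. unfold exp_coef, Binomial.C.
  replace (a ^ k) with (a ^ l * a ^ (k - l)) by (rewrite <- pow_add; f_equal; lia).
  assert (H1 := INR_fact_neq_0 l). assert (H2 := INR_fact_neq_0 (k - l)).
  assert (H3 := INR_fact_neq_0 k). field. auto.
Qed.

Definition closed_form (sigma a : R) (k : nat) : R :=
  (sigma * exp (- a) - 1) * exp_coef a k * pow_geom_sum sigma k.

(* By the binomial identity for s_k, the closed formula solves the same
   convolution identity as rho*. *)
Lemma closed_form_solves_convolution (sigma a : R) : 1 < sigma ->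
  solves_convolution sigma (sigma * exp (- a) - 1) a (closed_form sigma a).
Proof.
  intros Hs k. set (c := sigma * exp (- a) - 1).
  rewrite (sum_eq _ (fun l => Binomial.C k l * pow_geom_sum sigma l * (c * exp_coef a k))).
  - rewrite <- scal_sum, pow_geom_sum_binomial by exact Hs.
    unfold closed_form. fold c. ring.
  - intros l Hl. unfold closed_form. fold c.
    replace (c * exp_coef a l * pow_geom_sum sigma l * exp_coef a (k - l))
      with (c * pow_geom_sum sigma l * (exp_coef a l * exp_coef a (k - l))) by ring.
    rewrite exp_coef_mul by exact Hl. ring.
Qed.

Lemma rho_closed_form (sigma a : R) (k : nat) :
  1 < sigma -> rho sigma a k = closed_form sigma a k.
Proof.
  intros Hs. apply (convolution_unique sigma (sigma * exp (- a) - 1) a); [lra | |].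
  - now apply rho_solves_convolution.
  - now apply closed_form_solves_convolution.
Qed.

Lemma rho_nonneg (sigma a : R) (k : nat) :
  1 < sigma -> 0 < a -> 1 < sigma * exp (- a) -> 0 <= rho sigma a k.
Proof.
  intros Hs Ha Hsa. rewrite rho_closed_form by exact Hs. unfold closed_form.
  apply Rmult_le_pos; [apply Rmult_le_pos|].
  - lra.
  - apply exp_coef_nonneg. lra.
  - now apply pow_geom_sum_nonneg.
Qed.

Lemma CV_radius_gt_of_bounded (b : nat -> R) (r x : R) :
  Rabs x < r ->
  (forall y, 0 < y < r -> exists M, forall n, Rabs (b n * y ^ n) <= M) ->
  Rbar_lt (Rabs x) (CV_radius b).
Proof.
  intros Hx H. destruct (CV_radius_bounded b) as [Hub _].
  assert (Hx0 := Rabs_pos x).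
  apply Rbar_lt_le_trans with ((Rabs x + r) / 2); [simpl; lra|].
  apply Hub, H. lra.
Qed.

Lemma exp_coef_radius (a x : R) : 0 <= a -> Rbar_lt (Rabs x) (CV_radius (exp_coef a)).
Proof.
  intros Ha. apply (CV_radius_gt_of_bounded _ (Rabs x + 1)); [lra|].
  intros y Hy. exists (exp (a * y)). intros n.
  replace (exp_coef a n * y ^ n) with (exp_coef (a * y) n)
    by (unfold exp_coef; rewrite Rpow_mult_distr; field; apply INR_fact_neq_0).
  assert (Hay : 0 <= a * y) by (apply Rmult_le_pos; lra).
  rewrite Rabs_pos_eq.
  - now apply exp_coef_le_exp.
  - now apply exp_coef_nonneg.
Qed.

Lemma is_pseries_exp_coef (a x : R) : is_pseries (exp_coef a) x (exp (a * x)).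
Proof.
  assert (H := is_exp_Reals (a * x)). apply is_pseries_R in H. apply is_pseries_R.
  eapply is_series_Rext; [|exact H]. intros n.
  unfold exp_coef. rewrite Rpow_mult_distr. unfold Rdiv. ring.
Qed.

(* Multiplying sum u_k x^k by the exponential series e^{ax} (Cauchy product)
   turns the convolution identity into F (sigma - e^{ax}) = c e^{ax}. *)
Lemma convolution_generating_function (sigma c a x : R) (u : nat -> R) :
  0 <= a -> solves_convolution sigma c a u -> Rbar_lt (Rabs x) (CV_radius u) ->
  PSeries u x * (sigma - exp (a * x)) = c * exp (a * x).
Proof.
  intros Ha Hu Hr.
  assert (HF := PSeries_correct _ _ (CV_radius_inside _ _ Hr)).
  assert (HE := is_pseries_exp_coef a x).
  assert (Hprod := is_pseries_mult _ _ _ _ _ HF HE Hr (exp_coef_radius a x Ha)).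
  apply is_pseries_R in HF, HE, Hprod.
  assert (Hlin := is_series_Rminus _ _ _ _ (is_series_Rscal sigma _ _ HF)
                                          (is_series_Rscal c _ _ HE)).
  apply (is_series_Rext _ (fun n => PS_mult u (exp_coef a) n * x ^ n)) in Hlin.
  - assert (E := eq_trans (eq_sym (is_series_unique _ _ Hprod)) (is_series_unique _ _ Hlin)).
    rewrite Rmult_minus_distr_l. lra.
  - intros n. unfold PS_mult. replace (sum_f_R0 _ n) with (sigma * u n - c * exp_coef a n)
      by (rewrite <- (Hu n); ring).
    ring.
Qed.

Definition gen_fun (sigma a t : R) : R :=
  (sigma * exp (- a) - 1) * (exp (a * t) / (sigma - exp (a * t))).

Lemma exp_lt_of_hyp (sigma a : R) : 1 < sigma * exp (- a) -> exp a < sigma.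
Proof.
  intros Hsa. assert (He := exp_pos a). rewrite exp_Ropp in Hsa.
  apply (Rmult_lt_compat_r (exp a)) in Hsa; [|lra].
  rewrite Rmult_assoc, Rinv_l, Rmult_1_r, Rmult_1_l in Hsa by lra. exact Hsa.
Qed.

Lemma exp_lt_on_disk (sigma a t : R) :
  1 < sigma -> 0 < a -> Rabs t < ln sigma / a -> exp (a * t) < sigma.
Proof.
  intros Hs Ha Ht. rewrite <- (exp_ln sigma) by lra. apply exp_increasing.
  apply Rle_lt_trans with (a * Rabs t).
  - apply Rmult_le_compat_l; [lra | apply Rle_abs].
  - apply (Rmult_lt_compat_l a) in Ht; [|lra].
    replace (a * (ln sigma / a)) with (ln sigma) in Ht by (field; lra). exact Ht.
Qed.

(* The power series sum rho*_k x^k converges on |x| < ln sigma / a: for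
   0 < y < ln sigma / a the closed formula and the bound on s_k with r = a y
   give rho*_k y^k <= (sigma e^{-a} - 1) q/(1-q), q = e^{ay}/sigma. *)
Lemma rho_radius (sigma a x : R) : 1 < sigma -> 0 < a -> 1 < sigma * exp (- a) ->
  Rabs x < ln sigma / a -> Rbar_lt (Rabs x) (CV_radius (rho sigma a)).
Proof.
  intros Hs Ha Hsa Hx. apply (CV_radius_gt_of_bounded _ _ _ Hx). intros y Hy.
  assert (Hay : 0 < a * y) by (apply Rmult_lt_0_compat; lra).
  assert (HE : exp (a * y) < sigma)
    by (apply exp_lt_on_disk; [lra | lra | rewrite Rabs_pos_eq; lra]).
  set (c := sigma * exp (- a) - 1). set (Q := exp (a * y) / sigma / (1 - exp (a * y) / sigma)).
  exists (c * Q). intros n.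
  destruct (pow_geom_sum_bound sigma (a * y) n Hay HE) as [_ Hb]. fold Q in Hb.
  assert (Hsn := pow_geom_sum_nonneg sigma n Hs).
  assert (Hen := exp_coef_nonneg a n (Rlt_le _ _ Ha)).
  assert (Hyn : 0 < y ^ n) by (apply pow_lt; lra).
  assert (Hcancel : exp_coef a n * y ^ n * (INR (fact n) / (a * y) ^ n) = 1).
  { unfold exp_coef. rewrite Rpow_mult_distr.
    assert (Hf := INR_fact_neq_0 n). assert (Han : a ^ n <> 0) by (apply pow_nonzero; lra).
    field. repeat split; lra. }
  rewrite rho_closed_form by exact Hs. unfold closed_form. fold c.
  assert (Hc : 0 <= c) by (unfold c; lra).
  assert (Hw : 0 <= c * exp_coef a n * y ^ n)
    by (apply Rmult_le_pos; [apply Rmult_le_pos|]; lra).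
  replace (c * exp_coef a n * pow_geom_sum sigma n * y ^ n)
    with (c * exp_coef a n * y ^ n * pow_geom_sum sigma n) by ring.
  rewrite Rabs_pos_eq by (apply Rmult_le_pos; lra).
  apply Rle_trans with (c * exp_coef a n * y ^ n * (INR (fact n) / (a * y) ^ n * Q)).
  - apply Rmult_le_compat_l; [exact Hw | exact Hb].
  - right. transitivity (c * Q * (exp_coef a n * y ^ n * (INR (fact n) / (a * y) ^ n)));
      [ring | rewrite Hcancel; ring].
Qed.

Lemma rho_generating_function (sigma a x : R) :
  1 < sigma -> 0 < a -> 1 < sigma * exp (- a) -> Rabs x < ln sigma / a ->
  is_pseries (rho sigma a) x (gen_fun sigma a x).
Proof.
  intros Hs Ha Hsa Hx.
  assert (Hr := rho_radius sigma a x Hs Ha Hsa Hx).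
  assert (HE := exp_lt_on_disk sigma a x Hs Ha Hx).
  assert (Hid := convolution_generating_function sigma _ a x (rho sigma a) (Rlt_le _ _ Ha)
                   (rho_solves_convolution sigma a Hs) Hr).
  replace (gen_fun sigma a x) with (PSeries (rho sigma a) x).
  - exact (PSeries_correct _ _ (CV_radius_inside _ _ Hr)).
  - unfold gen_fun. rewrite Rmult_div_assoc, <- Hid. field. lra.
Qed.

Lemma PSeries_derive_on_disk (c : nat -> R) (f f' : R -> R) (r : R) :
  (forall t, Rabs t < r -> Rbar_lt (Rabs t) (CV_radius c)) ->
  (forall t, Rabs t < r -> PSeries c t = f t) ->
  (forall t, Rabs t < r -> is_derive f t (f' t)) ->
  forall t, Rabs t < r -> PSeries (PS_derive c) t = f' t.
Proof.
  intros Hr Hf Hd t Ht.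
  assert (Hloc : locally t (fun u => PSeries c u = f u)).
  { apply Rabs_def2 in Ht.
    apply (locally_interval _ t (- r) r); simpl; [lra | lra |].
    intros u H1 H2. apply Hf, Rabs_def1; lra. }
  assert (H := is_derive_ext_loc _ _ _ _ Hloc (is_derive_PSeries _ _ (Hr t Ht))).
  rewrite <- (is_derive_unique _ _ _ H). apply is_derive_unique, Hd, Ht.
Qed.

Lemma is_series_of_pseries_at_1 (c : nat -> R) (l : R) : is_pseries c 1 l -> is_series c l.
Proof.
  intros H. apply is_pseries_R in H.
  eapply is_series_Rext; [|exact H]. intros n. cbv beta. rewrite pow1. ring.
Qed.

Lemma first_moment_of_derive (c : nat -> R) (l : R) :
  is_pseries (PS_derive c) 1 l -> is_series (fun n => INR n * c n) l.
Proof.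
  intros H. apply is_series_of_pseries_at_1 in H. apply is_series_decr_1.
  replace (plus _ _) with l by (cbn; ring).
  eapply is_series_Rext; [|exact H]. intros n. reflexivity.
Qed.

Lemma second_factorial_moment_of_derive (c : nat -> R) (l : R) :
  is_pseries (PS_derive (PS_derive c)) 1 l -> is_series (fun n => INR n * (INR n - 1) * c n) l.
Proof.
  intros H. apply is_series_of_pseries_at_1 in H.
  do 2 (apply is_series_decr_1; replace (plus _ _) with l by (cbn; ring)).
  eapply is_series_Rext; [|exact H]. intros n. unfold PS_derive.
  rewrite !S_INR. ring.
Qed.

(* The centred second moment from the factorial moments:
   (n - mu)^2 = n(n-1) + (1 - 2 mu) n + mu^2. *)
Lemma centred_moment_of_factorial_moments (p : nat -> R) (m0 m1 m2 mu : R) :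
  is_series p m0 -> is_series (fun n => INR n * p n) m1 ->
  is_series (fun n => INR n * (INR n - 1) * p n) m2 ->
  is_series (fun n => (INR n - mu) ^ 2 * p n) (m2 + (1 - 2 * mu) * m1 + mu ^ 2 * m0).
Proof.
  intros H0 H1 H2.
  assert (H := is_series_Rplus _ _ _ _
                 (is_series_Rplus _ _ _ _ H2 (is_series_Rscal (1 - 2 * mu) _ _ H1))
                 (is_series_Rscal (mu ^ 2) _ _ H0)).
  eapply is_series_Rext; [|exact H]. intros n. cbv beta. ring.
Qed.

Definition gen_fun_d1 (sigma a t : R) : R :=
  (sigma * exp (- a) - 1) * a * sigma * exp (a * t) / (sigma - exp (a * t)) ^ 2.

Definition gen_fun_d2 (sigma a t : R) : R :=
  (sigma * exp (- a) - 1) * a ^ 2 * sigma * exp (a * t) * (sigma + exp (a * t))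
  / (sigma - exp (a * t)) ^ 3.

Lemma is_derive_gen_fun (sigma a t : R) :
  exp (a * t) < sigma -> is_derive (gen_fun sigma a) t (gen_fun_d1 sigma a t).
Proof. intros H. unfold gen_fun, gen_fun_d1. auto_derive; [lra | field; lra]. Qed.

Lemma is_derive_gen_fun_d1 (sigma a t : R) :
  exp (a * t) < sigma -> is_derive (gen_fun_d1 sigma a) t (gen_fun_d2 sigma a t).
Proof.
  intros H. unfold gen_fun_d1, gen_fun_d2. auto_derive.
  - rewrite Rmult_1_r. apply Rmult_integral_contrapositive. split; lra.
  - field. lra.
Qed.

Section RhoMoments.

Variables sigma a : R.
Hypotheses (Hs : 1 < sigma) (Ha : 0 < a) (Hsa : 1 < sigma * exp (- a)).

Lemma one_in_disk : Rabs 1 < ln sigma / a.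
Proof.
  assert (He := exp_pos a). assert (Hea := exp_lt_of_hyp sigma a Hsa).
  rewrite Rabs_pos_eq by lra.
  apply (Rmult_lt_reg_l a); [lra|].
  replace (a * (ln sigma / a)) with (ln sigma) by (field; lra).
  rewrite <- (ln_exp a) at 1. rewrite Rmult_1_r. apply ln_increasing; lra.
Qed.

Lemma rho_radius_derive (t : R) :
  Rabs t < ln sigma / a -> Rbar_lt (Rabs t) (CV_radius (PS_derive (rho sigma a))).
Proof. intros Ht. rewrite CV_radius_derive. now apply rho_radius. Qed.

Lemma rho_PSeries_derive (t : R) :
  Rabs t < ln sigma / a -> PSeries (PS_derive (rho sigma a)) t = gen_fun_d1 sigma a t.
Proof.
  apply (PSeries_derive_on_disk _ (gen_fun sigma a)); intros u Hu.
  - now apply rho_radius.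
  - now apply is_pseries_unique, rho_generating_function.
  - now apply is_derive_gen_fun, exp_lt_on_disk.
Qed.

Lemma rho_PSeries_derive2 (t : R) : Rabs t < ln sigma / a ->
  PSeries (PS_derive (PS_derive (rho sigma a))) t = gen_fun_d2 sigma a t.
Proof.
  apply (PSeries_derive_on_disk _ (gen_fun_d1 sigma a)); intros u Hu.
  - now apply rho_radius_derive.
  - now apply rho_PSeries_derive.
  - now apply is_derive_gen_fun_d1, exp_lt_on_disk.
Qed.

Lemma rho_total_mass : is_series (rho sigma a) (gen_fun sigma a 1).
Proof. apply is_series_of_pseries_at_1, rho_generating_function; auto using one_in_disk. Qed.

Lemma rho_first_moment : is_series (fun n => INR n * rho sigma a n) (gen_fun_d1 sigma a 1).
Proof.
  apply first_moment_of_derive. rewrite <- rho_PSeries_derive by exact one_in_disk.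
  apply PSeries_correct, CV_radius_inside, rho_radius_derive, one_in_disk.
Qed.

Lemma rho_second_factorial_moment :
  is_series (fun n => INR n * (INR n - 1) * rho sigma a n) (gen_fun_d2 sigma a 1).
Proof.
  apply second_factorial_moment_of_derive.
  rewrite <- rho_PSeries_derive2 by exact one_in_disk.
  apply PSeries_correct, CV_radius_inside. rewrite CV_radius_derive.
  apply rho_radius_derive, one_in_disk.
Qed.

End RhoMoments.

Definition rho_mean (sigma a : R) : R := sigma * a * exp (- a) / (sigma * exp (- a) - 1).

Lemma gen_fun_at_1 (sigma a : R) (Hsa : 1 < sigma * exp (- a)) :
  gen_fun sigma a 1 = 1 /\
  gen_fun_d1 sigma a 1 = rho_mean sigma a /\
  gen_fun_d2 sigma a 1 + (1 - 2 * rho_mean sigma a) * rho_mean sigma a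
    + rho_mean sigma a ^ 2 * 1
  = sigma * a * exp (- a) * (sigma * exp (- a) + a - 1) / (sigma * exp (- a) - 1) ^ 2.
Proof.
  assert (He := exp_pos a). assert (Hlt := exp_lt_of_hyp sigma a Hsa).
  assert (Hc : sigma * / exp a - 1 <> 0).
  { rewrite <- exp_Ropp. lra. }
  unfold gen_fun, gen_fun_d1, gen_fun_d2, rho_mean. rewrite Rmult_1_r, exp_Ropp.
  repeat split; field; repeat split; lra.
Qed.

Theorem mainTheorem2 (sigma a : R) (Hsigma : 1 < sigma) (Ha : 0 < a)
  (Hsa : 1 < sigma * exp (- a)) :
  (* generating function, on its disc of convergence |x| < ln sigma / a *)
  (forall x : R, Rabs x < ln sigma / a ->
     infinite_sum (fun k => rho sigma a k * x ^ k)
       ((sigma * exp (- a) - 1) * (exp (a * x) / (sigma - exp (a * x))))) /\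
  (* closed formula *)
  (forall k : nat, exists s : R,
     infinite_sum (fun i => INR (S i) ^ k / sigma ^ (S i)) s /\
     rho sigma a k = (sigma * exp (- a) - 1) * (a ^ k / INR (fact k)) * s) /\
  (* probability distribution on N *)
  (forall k : nat, 0 <= rho sigma a k) /\
  infinite_sum (rho sigma a) 1 /\
  (* expectation *)
  infinite_sum (fun k => INR k * rho sigma a k)
    (sigma * a * exp (- a) / (sigma * exp (- a) - 1)) /\
  (* variance *)
  infinite_sum
    (fun k => (INR k - sigma * a * exp (- a) / (sigma * exp (- a) - 1)) ^ 2
              * rho sigma a k)
    (sigma * a * exp (- a) * (sigma * exp (- a) + a - 1)
       / (sigma * exp (- a) - 1) ^ 2).
Proof.
  destruct (gen_fun_at_1 sigma a Hsa) as (Hmass1 & Hmean1 & Hvar1).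
  assert (Hmass := rho_total_mass sigma a Hsigma Ha Hsa).
  assert (Hmean := rho_first_moment sigma a Hsigma Ha Hsa).
  assert (Hvar := centred_moment_of_factorial_moments _ _ _ _ (rho_mean sigma a) Hmass Hmean
                    (rho_second_factorial_moment sigma a Hsigma Ha Hsa)).
  rewrite Hmass1, Hmean1, Hvar1 in Hvar. rewrite Hmass1 in Hmass. rewrite Hmean1 in Hmean.
  split; [|split; [|split; [|split; [|split]]]].
  - intros x Hx. apply is_pseries_Reals, rho_generating_function; assumption.
  - intros k. exists (pow_geom_sum sigma k). split.
    + now apply is_series_Reals, pow_geom_sum_correct.
    + now apply rho_closed_form.
  - intros k. now apply rho_nonneg.
  - now apply is_series_Reals.
  - now apply is_series_Reals.
  - now apply is_series_Reals.
Qed.
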